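(* Let $G_n(\lambda)=\binom{n}{\lambda}\mathbb P(\sigma(\omega)\in\mathcal T_\lambda)$ for $\lambda\vdash n$. Then \[ Z_n(\beta)\asymp\sum_{\lambda\vdash n}G_n(\lambda), \] and \[ e^{(h/\theta)n}Z_n(\beta,h)\asymp\begin{cases}\sum_{\lambda\vdash n}e^{h\lambda_1}G_n(\lambda),&h>0,\\ \sum_{\lambda\vdash n}e^{h\lambda_\theta}G_n(\lambda),&h<0.\end{cases} \]
   Context: Fix $\theta\in\{2,3,\dots\}$, $\beta>0$, $h\in\mathbb R$. Let $V=\{1,\dots,n\}$, $E$ the set of unordered pairs of distinct elements of $V$. Under $\mathbb P$ (expectation $\mathbb E$), let $\omega=(\omega_{xy}:xy\in E)$ be independent rate-1 Poisson point processes on $[0,\beta/n]$, and $\sigma(\omega)\in\mathcal S_n$ the time-ordered composition of the transpositions $(x,y)$ over all points $t\in\omega_{xy}$. $\mathcal C(\omega)$ is the set of cycles of $\sigma(\omega)$ (including fixed points), $\ell(\omega)=|\mathcal C(\omega)|$, $|\gamma|$ the size of a cycle. $Z_n(\beta)=\mathbb E[\theta^{\ell(\omega)}]$ and $Z_n(\beta,h)=e^{-(h/\theta)n}\mathbb E\big[\prod_{\gamma\in\mathcal C(\omega)}(e^{h|\gamma|}+\theta-1)\big]$. A partition $\lambda\vdash n$ here means $\lambda=(\lambda_1,\dots,\lambda_\theta)$ of nonnegative integers with $\lambda_1\ge\dots\ge\lambda_\theta$ and $\sum\lambda_j=n$; $\binom{n}{\lambda}=n!/(\lambda_1!\cdots\lambda_\theta!)$;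 $\mathcal T_\lambda$ is the Young subgroup of permutations fixing each of the sets $\{1,\dots,\lambda_1\}$, $\{\lambda_1+1,\dots,\lambda_1+\lambda_2\}$, etc. The notation $a_n\asymp b_n$ means there is a constant $C>0$ (not depending on $n$) with $\frac1C b_n\le a_n\le Cb_n$ for all $n$. *)

From HB Require Import structures.
From mathcomp Require Import all_boot all_order all_algebra all_fingroup.
From mathcomp Require Import all_classical all_reals.
From mathcomp Require Import topology normedtype sequences exp.
Set Implicit Arguments. Unset Strict Implicit. Unset Printing Implicit Defensive.
Import Order.TTheory GRing.Theory Num.Theory.
Import numFieldNormedType.Exports.
Local Open Scope ring_scope.

Section Interchange.
Variable R : realType.

(* E = unordered pairs of distinct vertices of V = 'I_n, encoded as (x,y) with x < y *)
Definition edge (n : nat) := {e : 'I_n * 'I_n | (nat_of_ord e.1 < nat_of_ord e.2)%N}.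

Definition tperm_e (n : nat) (e : edge n) : 'S_n := tperm (val e).1 (val e).2.

(* time-ordered composition of a word of transpositions: the i-th transposition
   acts i-th (mathcomp's s * t applies s first, then t) *)
Definition comp_word (n k : nat) (w : {ffun 'I_k -> edge n}) : 'S_n :=
  (\prod_(i < k) tperm_e (w i))%g.

(* Law of sigma(omega): the superposition of the |E| independent rate-1 Poisson
   processes on [0, t], t = beta/n, has N ~ Poisson(|E| t) points carrying i.i.d.
   uniform edge marks, so a given time-ordered word w in E^k has probability
   e^{-|E| t} t^k / k!. *)
Definition Psigma (n : nat) (beta : R) (pi : 'S_n) : R :=
  let t := beta / n%:R in
  limn (fun N => \sum_(k < N)
     (expR (- (#|{: edge n}|%:R * t)) * t ^+ k / (k`!)%:R
      * #|[set w : {ffun 'I_k -> edge n} | comp_word w == pi]|%:R)).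

(* number of cycles (fixed points included) *)
Definition ncycles (n : nat) (pi : 'S_n) : nat := #|porbits pi|.

Definition Zn (theta n : nat) (beta : R) : R :=
  \sum_(pi : 'S_n) Psigma beta pi * (theta%:R) ^+ (ncycles pi).

Definition Znh (theta n : nat) (beta h : R) : R :=
  expR (- (h / theta%:R) * n%:R) *
  \sum_(pi : 'S_n) Psigma beta pi *
     \prod_(g in porbits pi) (expR (h * (#|g|)%:R) + theta%:R - 1).

(* partitions lambda = (lambda_1,...,lambda_theta), encoded as functions
   'I_theta -> 'I_(n.+1); lam l j is lambda_{j+1} (0-indexed), 0 if j >= theta *)
Definition lam (theta n : nat) (l : {ffun 'I_theta -> 'I_n.+1}) (j : nat) : nat :=
  nth 0 [seq val (l i) | i <- enum 'I_theta] j.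

Definition is_partition (theta n : nat) (l : {ffun 'I_theta -> 'I_n.+1}) : bool :=
  (\sum_(i < theta) lam l i == n)%N &&
  [forall i : 'I_theta, forall j : 'I_theta, (i <= j)%N ==> (lam l j <= lam l i)%N].

Definition multinom (theta n : nat) (l : {ffun 'I_theta -> 'I_n.+1}) : R :=
  (n`!)%:R / \prod_(i < theta) ((lam l i)`!)%:R.

Definition inblock (theta n : nat) (l : {ffun 'I_theta -> 'I_n.+1}) (j x : nat) : bool :=
  ((\sum_(i < theta | (i < j)%N) lam l i <= x)%N &&
   (x < \sum_(i < theta | (i <= j)%N) lam l i)%N).

Definition in_young (theta n : nat) (l : {ffun 'I_theta -> 'I_n.+1}) (pi : 'S_n) : bool :=
  [forall x : 'I_n, forall j : 'I_theta, inblock l j x == inblock l j (pi x)].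

Definition Gn (theta n : nat) (beta : R) (l : {ffun 'I_theta -> 'I_n.+1}) : R :=
  multinom l * \sum_(pi : 'S_n | in_young l pi) Psigma beta pi.

End Interchange.

(* Expanding every cycle factor as a sum over [theta] colours writes [Z] as a sum,
   over colourings [c] of [{1..n}], of a product of colour weights times the
   probability [Q c] that [sigma] preserves [c]. The law of [sigma] is invariant
   under conjugation, so [Q c] depends only on the partition [lambda] obtained by
   sorting the colour class sizes, and equals [P(sigma \in T_lambda)]. The colourings
   of shape [lambda] are covered by the at most [theta!] relabellings of the block
   colouring of [lambda], each realised by exactly [binom n lambda] colourings; their
   weights are at most [1], [e^{h lambda_1}] or [e^{h lambda_theta}] respectively,
   with equality for some relabelling. This gives the bounds with constant [theta!]. *)

From mathcomp Require Import all_boot all_order all_algebra all_fingroup.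
From mathcomp Require Import all_classical all_reals.
From mathcomp Require Import topology normedtype sequences exp.
Set Implicit Arguments. Unset Strict Implicit. Unset Printing Implicit Defensive.
Import Order.TTheory GRing.Theory Num.Theory.
Import numFieldNormedType.Exports.
Local Open Scope ring_scope.

Lemma sum_count_mem (T : finType) (s : seq T) :
  (\sum_(y : T) count_mem y s)%N = size s.
Proof.
elim: s => [|x s IH] /=; first by rewrite big1.
rewrite big_split /= IH (bigD1 x) //= eqxx big1 ?addn0 // => y /negPf.
by rewrite eq_sym => ->.
Qed.

Lemma card_tuple_cons (T : finType) n (P : pred (n.+1.-tuple T)) :
  #|[set c | P c]| = (\sum_(y : T) #|[set c : n.-tuple T | P [tuple of y :: c]]|)%N.
Proof.
rewrite -sum1dep_card.
transitivity (\sum_(y : T) \sum_(c : n.-tuple T | P [tuple of y :: c]) 1)%N; last first.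
  by apply: eq_bigr => y _; rewrite sum1dep_card.
rewrite pair_big_dep /=.
rewrite (reindex (fun p : T * n.-tuple T => [tuple of p.1 :: p.2])) /=; last first.
  exists (fun c : n.+1.-tuple T => (thead c, [tuple of behead c])).
    by move=> [y c] _ /=; congr (_, _); apply: val_inj.
  by move=> c _; apply: val_inj => /=; rewrite [in RHS](tuple_eta c).
by apply: eq_bigl => -[y c].
Qed.

Lemma card_perm_eq_tuple (T : finType) n (s : seq T) : size s = n ->
  (#|[set c : n.-tuple T | perm_eq c s]| * \prod_(j : T) (count_mem j s)`!)%N = n`!.
Proof.
elim: n s => [|n IH] s size_s.
  have -> : s = [::] by case: s size_s.
  rewrite big1 // muln1 (_ : [set c : 0.-tuple T | perm_eq c [::]] = [set [tuple]]).
    by rewrite cards1.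
  by apply/setP => c; rewrite !inE [c]tuple0 eqxx.
rewrite card_tuple_cons big_distrl /=.
have by_head y : (#|[set c : n.-tuple T | perm_eq [tuple of y :: c] s]| *
     \prod_(j : T) (count_mem j s)`!)%N = (count_mem y s * n`!)%N.
  have [ys|yns] := boolP (y \in s); last first.
    rewrite (count_memPn yns) mul0n; apply/eqP; rewrite muln_eq0 cards_eq0.
    apply/orP; left; apply/eqP/setP => c; rewrite !inE.
    by apply: contraNF yns => /perm_mem <-; rewrite inE eqxx.
  have size_rem : size (rem y s) = n by rewrite size_rem // size_s.
  have count_rem j : count_mem j s = ((y == j) + count_mem j (rem y s))%N.
    by have /seq.permP -> := perm_to_rem ys.
  rewrite -(IH _ size_rem) mulnCA; congr (_ * _)%N.
    apply: eq_card => c; rewrite !inE.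
    by rewrite (permPr (perm_to_rem ys)) /= perm_cons.
  rewrite (bigD1 y) //= [in RHS](bigD1 y) //= mulnA; congr (_ * _)%N.
    by rewrite count_rem eqxx add1n factS.
  by apply: eq_bigr => j /negPf Hj; rewrite count_rem eq_sym Hj.
under eq_bigr do rewrite by_head.
by rewrite -big_distrl /= sum_count_mem size_s factS mulnC.
Qed.

Section Colorings.
Variables (n k : nat).
Implicit Types (c : n.-tuple 'I_k) (p : 'S_n).

Definition preserves p c : bool := [forall i, tnth c (p i) == tnth c i].

Definition weight (R : pzSemiRingType) (w : 'I_k -> R) c : R := \prod_(i < n) w (tnth c i).

Lemma preserves_expg p c m i : preserves p c -> tnth c ((p ^+ m)%g i) = tnth c i.
Proof.
move=> /forallP pc; elim: m i => [|m IH] i; first by rewrite expg0 perm1.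
by rewrite expgSr permM (eqP (pc _)) IH.
Qed.

Lemma weight_orbit_coloring (R : comPzSemiRingType) (w : 'I_k -> R) p
    (f : {set 'I_n} -> 'I_k) :
  weight w [tuple f (porbit p i) | i < n] = \prod_(g in porbits p) w (f g) ^+ #|g|.
Proof.
rewrite /weight (partition_big (porbit p) (mem (porbits p))) /=; last first.
  by move=> i _; rewrite imset_f.
apply: eq_bigr => _ /imsetP[y _ ->].
rewrite (eq_bigr (fun _ => w (f (porbit p y)))); last first.
  by move=> i /eqP <-; rewrite tnth_mktuple.
by rewrite prodr_const; congr (_ ^+ _); apply: eq_card => i; rewrite -eq_porbit_mem.
Qed.

(* Choosing one colour per cycle is the same as choosing a colouring preserved by [p]. *)
Lemma prod_porbits_sum_expr (R : comPzSemiRingType) (j0 : 'I_k) (w : 'I_k -> R) p :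
  \prod_(g in porbits p) \sum_(j < k) w j ^+ #|g| =
  \sum_(c | preserves p c) weight w c.
Proof.
rewrite (big_distr_big j0) /=.
pose orbit_col (f : {ffun {set 'I_n} -> 'I_k}) := [tuple f (porbit p i) | i < n].
pose col_orbit c := [ffun g : {set 'I_n} =>
   if g \in porbits p then odflt j0 (omap (tnth c) [pick x in g]) else j0].
have col_orbitK c : preserves p c -> orbit_col (col_orbit c) = c.
  move=> pc; apply: eq_from_tnth => i; rewrite tnth_mktuple ffunE imset_f //=.
  case: pickP => [x|/(_ i)]; last by rewrite porbit_id.
  by case/porbitP => m -> /=; rewrite preserves_expg.
rewrite (reindex_onto orbit_col col_orbit col_orbitK); symmetry.
apply: eq_big => [f|f _]; last exact: weight_orbit_coloring.
have -> : preserves p (orbit_col f).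
  apply/forallP => i; rewrite !tnth_mktuple.
  by rewrite (_ : p i = (p ^+ 1)%g i) ?porbit_perm ?expg1.
apply/eqP/idP => [<-|fP].
  apply/pffun_onP; split=> [|//]; apply/fintype.subsetP => g; rewrite inE.
  by apply: contraR => gN; rewrite ffunE (negPf gN).
apply/ffunP => g; rewrite ffunE; case: ifP => [/imsetP[y _ ->]|gN].
  case: pickP => [x xy|/(_ y)]; last by rewrite porbit_id.
  by rewrite /= tnth_mktuple; apply/congr1/eqP; rewrite eq_porbit_mem.
case/pffun_onP: fP => /fintype.subsetP fsupp _; apply/eqP; rewrite eq_sym.
by apply: contraFT gN => gf; apply: fsupp; rewrite inE.
Qed.

End Colorings.

Section StabWeight.
Variables (R : numDomainType) (n k : nat) (P : 'S_n -> R).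
Hypothesis P_conj : forall p t : 'S_n, P (p ^ t)%g = P p.
Implicit Types (c d : n.-tuple 'I_k).

Definition stab_weight c : R := \sum_(p | preserves p c) P p.

Lemma stab_weight_perm_eq c d : perm_eq c d -> stab_weight c = stab_weight d.
Proof.
case/tuple_permP => t cdt.
have -> : c = [tuple tnth d (t i) | i < n] by apply: val_inj.
rewrite /stab_weight [in RHS](reindex_inj (@conjg_inj _ t)) /=.
apply: eq_big => [p|p _]; last by rewrite P_conj.
apply/forallP/forallP => pc i.
  rewrite -(permKV t i) permJ; have := pc (t^-1 i)%g.
  by rewrite !tnth_mktuple permKV.
by have := pc (t i); rewrite !tnth_mktuple permJ.
Qed.

Lemma stab_weight_relabel (r : 'S_k) c : stab_weight (map_tuple r c) = stab_weight c.
Proof.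
by apply: eq_bigl => p; apply/forallP/forallP => pc i; have := pc i;
  rewrite !tnth_map (inj_eq perm_inj).
Qed.

End StabWeight.

Lemma sum_nat_interval (a b m : nat) : (a <= b <= m)%N ->
  (\sum_(i < m) ((a <= i) && (i < b)))%N = (b - a)%N.
Proof.
case/andP=> ab bm.
rewrite -(big_mkord xpredT (fun i => nat_of_bool ((a <= i) && (i < b))%N)).
rewrite (big_cat_nat (leq0n a) (leq_trans ab bm)) (big_cat_nat ab bm) /=.
rewrite big1_seq => [|i]; last first.
  by rewrite mem_index_iota => /and3P[_ _ ia]; rewrite leqNgt ia.
rewrite [X in (_ + (_ + X))%N]big1_seq => [|i]; last first.
  by rewrite mem_index_iota => /and3P[_ bi _]; rewrite ltnNge bi andbF.
rewrite add0n addn0 (eq_big_nat _ _ (F2 := fun=> 1%N)) => [|i /andP[-> ->] //].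
by rewrite sum_nat_const_nat muln1.
Qed.

Lemma count_tuple (T : eqType) n (t : n.-tuple T) (a : pred T) :
  count a t = (\sum_(i < n) a (tnth t i))%N.
Proof.
rewrite -sum1_count big_tuple big_mkcond /=.
by apply: eq_bigr => i _; case: (a _).
Qed.

Section Blocks.
Variables (th n : nat).
Implicit Types (l : {ffun 'I_th -> 'I_n.+1}).

Lemma lamE l (i : 'I_th) : lam l i = l i.
Proof. by rewrite /lam (nth_map i) ?size_enum_ord // nth_ord_enum. Qed.

Lemma partition_le l (i j : 'I_th) :
  is_partition l -> (i <= j)%N -> (lam l j <= lam l i)%N.
Proof. by case/andP=> _ /forallP/(_ i)/forallP/(_ j)/implyP. Qed.

Definition block_start l (j : nat) : nat := (\sum_(i < th | (i < j)%N) lam l i)%N.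

Lemma block_start0 l : block_start l 0 = 0%N.
Proof. by rewrite /block_start big_pred0. Qed.

Lemma block_start_le l : {homo block_start l : j j' / (j <= j')%N}.
Proof.
move=> j j' jj'; rewrite /block_start !(big_mkcond (fun i : 'I_th => (i < _)%N)) /=.
by apply: leq_sum => i _; case: ifP => // ij; rewrite (leq_trans ij jj').
Qed.

Lemma block_startS l (j : 'I_th) : block_start l j.+1 = (block_start l j + lam l j)%N.
Proof.
rewrite /block_start (bigD1 j) //= addnC; congr (_ + _)%N; apply: eq_bigl => i.
by rewrite ltnS leq_eqVlt -val_eqE andb_orl andbN /= andb_idr // => /ltn_eqF ->.
Qed.

Lemma block_start_full l j : is_partition l -> (th <= j)%N -> block_start l j = n.
Proof.
case/andP=> /eqP sum_l _ thj; rewrite /block_start -[RHS]sum_l.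
by apply: eq_bigl => i; rewrite (leq_trans (ltn_ord i) thj).
Qed.

Lemma inblockE l j x : inblock l j x = (block_start l j <= x < block_start l j.+1)%N.
Proof. by []. Qed.

Lemma inblock_exists l (x : 'I_n) : is_partition l -> exists j : 'I_th, inblock l j x.
Proof.
move=> lP; have th_gt0 : (0 < th)%N.
  rewrite lt0n; apply/eqP => th0; have := ltn_ord x.
  by rewrite -[X in (_ < X)%N](block_start_full lP (eq_leq th0)) block_start0.
have exP : exists m, (x < block_start l m.+1)%N by exists th; rewrite block_start_full.
case: (ex_minnP exP) => m xm minm.
have mth : (m < th)%N.
  have := minm th.-1; rewrite prednK // block_start_full // => /(_ (ltn_ord x)).
  by move/leq_ltn_trans; apply; rewrite ltn_predL.
exists (Ordinal mth); rewrite inblockE /= xm andbT.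
case: m xm minm mth => [|m] xm minm mth; first by rewrite block_start0.
by rewrite leqNgt; apply/negP => /minm; rewrite ltnn.
Qed.

Lemma inblock_uniq l x (j j' : 'I_th) : inblock l j x -> inblock l j' x -> j = j'.
Proof.
have disjoint (a b : 'I_th) : (a < b)%N -> inblock l a x -> inblock l b x -> False.
  move=> ab; rewrite !inblockE => /andP[_ xa] /andP[bx _].
  by have := leq_ltn_trans (leq_trans (block_start_le l ab) bx) xa; rewrite ltnn.
move=> jx j'x; case: (ltngtP j j') => [lt|lt|/val_inj //].
  by case: (disjoint _ _ lt jx j'x).
by case: (disjoint _ _ lt j'x jx).
Qed.

Variable j0 : 'I_th.

Definition block_coloring l : n.-tuple 'I_th :=
  [tuple odflt j0 [pick j : 'I_th | inblock l j i] | i < n].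

Lemma inblock_coloring l (x : 'I_n) (j : 'I_th) : is_partition l ->
  inblock l j x = (tnth (block_coloring l) x == j).
Proof.
move=> lP; rewrite tnth_mktuple.
case: pickP => [k xk|noblock]; last by case: (inblock_exists x lP) => k; rewrite noblock.
by apply/idP/eqP => [xj|<-//]; apply: inblock_uniq xk xj.
Qed.

Lemma in_young_preserves l (p : 'S_n) : is_partition l ->
  in_young l p = preserves p (block_coloring l).
Proof.
move=> lP; apply/forallP/forallP => pl x.
  have /forallP/(_ (tnth (block_coloring l) x)) := pl x.
  by rewrite !inblock_coloring // eqxx eq_sym => /eqP.
by apply/forallP => j; rewrite !inblock_coloring // (eqP (pl x)).
Qed.

Lemma count_block_coloring l (j : 'I_th) : is_partition l ->
  count_mem j (block_coloring l) = lam l j.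
Proof.
move=> lP; rewrite count_tuple.
under eq_bigr => x _ do rewrite /= -inblock_coloring // inblockE.
rewrite sum_nat_interval; first by rewrite block_startS addKn.
have := block_start_le l (ltn_ord j); rewrite (block_start_full lP (leqnn th)) => ->.
by rewrite andbT; apply: block_start_le.
Qed.

End Blocks.

Lemma geq_trans : transitive geq. Proof. exact: rev_trans leq_trans. Qed.
Lemma geq_total : total geq. Proof. by move=> x y; apply: leq_total. Qed.
Lemma geq_anti : antisymmetric geq.
Proof. by move=> x y /andP[yx xy]; apply/anti_leq/andP. Qed.

Section Shapes.
Variables (th n : nat).
Implicit Types (l : {ffun 'I_th -> 'I_n.+1}) (c d : n.-tuple 'I_th).

Definition parts l : seq nat := [seq val (l i) | i <- enum 'I_th].
Definition counts c : seq nat := [seq count_mem j c | j <- enum 'I_th].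
Definition shape c : seq nat := sort geq (counts c).
Definition partition_of c : {ffun 'I_th -> 'I_n.+1} :=
  [ffun i : 'I_th => inord (nth 0%N (shape c) i)].

Lemma size_shape c : size (shape c) = th.
Proof. by rewrite size_sort size_map size_enum_ord. Qed.

Lemma shape_leq c x : x \in shape c -> (x <= n)%N.
Proof.
rewrite (perm_mem (permEl (perm_sort _ _))) => /mapP[j _ ->].
by rewrite -[X in (_ <= X)%N](size_tuple c) count_size.
Qed.

Lemma parts_partition_of c : parts (partition_of c) = shape c.
Proof.
rewrite /parts (eq_map (g := fun i : 'I_th => nth 0%N (shape c) i)); last first.
  move=> i; rewrite ffunE /= inordK // ltnS; apply: (@shape_leq c).
  by rewrite mem_nth // size_shape.
rewrite (map_comp (nth 0%N (shape c)) val) val_enum_ord.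
by rewrite -(size_shape c) -/(mkseq _ _) mkseq_nth.
Qed.

Lemma parts_inj : injective parts.
Proof.
move=> l l' eq_parts; apply/ffunP => i; apply: val_inj.
by rewrite /= -!lamE /lam -/(parts l) -/(parts l') eq_parts.
Qed.

Lemma sorted_parts l : is_partition l -> sorted geq (parts l).
Proof.
move=> lP; apply/(sortedP 0%N) => i; rewrite size_map size_enum_ord => ith.
exact: (partition_le (i := Ordinal (ltn_trans (ltnSn i) ith)) (j := Ordinal ith)).
Qed.

Lemma partition_of_partition c : is_partition (partition_of c).
Proof.
have lam_shape i : lam (partition_of c) i = nth 0%N (shape c) i.
  by rewrite /lam -/(parts (partition_of c)) parts_partition_of.
apply/andP; split.
  under eq_bigr do rewrite lam_shape.
  rewrite -(big_mkord xpredT (fun i => nth 0%N (shape c) i)) -{1}(size_shape c).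
  rewrite -(big_nth 0%N xpredT (fun x => x)) (perm_big _ (permEl (perm_sort _ _))) /=.
  by rewrite big_map big_enum /= sum_count_mem size_tuple.
apply/forallP => i; apply/forallP => j; apply/implyP => ij; rewrite !lam_shape.
apply: (sorted_leq_nth geq_trans leqnn 0%N (sort_sorted geq_total _)) => //.
  by rewrite inE size_shape.
by rewrite inE size_shape.
Qed.

Lemma partition_ofE c l : is_partition l -> (partition_of c == l) = (shape c == parts l).
Proof.
move=> lP; apply/eqP/eqP => [<-|shape_c]; first by rewrite parts_partition_of.
by apply: parts_inj; rewrite parts_partition_of.
Qed.

Lemma shape_perm_eq c d : perm_eq c d -> shape c = shape d.
Proof.
by move=> /seq.permP cd; rewrite /shape /counts; congr sort; apply: eq_map => j; rewrite cd.
Qed.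

Lemma count_relabel (r : 'S_th) (s : seq 'I_th) (j : 'I_th) :
  count_mem (r j) (map r s) = count_mem j s.
Proof. by rewrite count_map; apply: eq_count => x; rewrite /= (inj_eq perm_inj). Qed.

Lemma shape_relabel (r : 'S_th) c : shape (map_tuple r c) = shape c.
Proof.
apply/(perm_sortP geq_total geq_trans geq_anti).
have -> : counts (map_tuple r c) =
          [seq count_mem j c | j <- [seq (r^-1)%g j | j <- enum 'I_th]].
  by rewrite -map_comp; apply: eq_map => j /=; rewrite -{1}(permKV r j) count_relabel.
apply: perm_map; apply: uniq_perm.
- by rewrite map_inj_uniq ?enum_uniq //; apply: perm_inj.
- exact: enum_uniq.
- by move=> x; rewrite mem_enum -{1}(permK r x) map_f ?mem_enum.
Qed.

Variable j0 : 'I_th.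

Lemma shape_block_coloring l : is_partition l -> shape (block_coloring j0 l) = parts l.
Proof.
move=> lP; rewrite /shape (_ : counts _ = parts l).
  by rewrite sorted_sort //; [exact: geq_trans | exact: sorted_parts].
by apply: eq_map => j; rewrite count_block_coloring // lamE.
Qed.

Lemma shape_relabel_block (r : 'S_th) l : is_partition l ->
  shape (map_tuple r (block_coloring j0 l)) = parts l.
Proof. by move=> lP; rewrite shape_relabel shape_block_coloring. Qed.

Lemma perm_eq_relabel_block c l : is_partition l -> shape c = parts l ->
  exists r : 'S_th, perm_eq c (map_tuple r (block_coloring j0 l)).
Proof.
move=> lP shape_c; pose ct : th.-tuple nat := [tuple count_mem j c | j < th].
have : perm_eq (parts l) ct by rewrite -shape_c perm_sort; apply: perm_refl.
case/tuple_permP => r parts_r; exists r.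
have lam_r (i : 'I_th) : lam l i = count_mem (r i) c.
  by rewrite /lam -/(parts l) parts_r -(tnth_nth 0%N) !tnth_mktuple.
apply/allP => y _ /=.
by rewrite -(permKV r y) count_relabel count_block_coloring // lam_r.
Qed.

End Shapes.

Lemma ler_sum_subpred (R : numDomainType) (I : finType) (P1 P2 : pred I) (F : I -> R) :
  subpred P1 P2 -> (forall i, 0 <= F i) ->
  \sum_(i | P1 i) F i <= \sum_(i | P2 i) F i.
Proof.
move=> P12 F_ge0; rewrite [X in X <= _]big_mkcond [X in _ <= X]big_mkcond /=.
by apply: ler_sum => i _; case: ifP => [/P12 ->//|_]; case: ifP.
Qed.

Section ColoringBounds.
Variables (R : realType) (th n : nat) (j0 : 'I_th) (P : 'S_n -> R) (w : 'I_th -> R).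
Hypotheses (P_conj : forall p t : 'S_n, P (p ^ t)%g = P p) (P_ge0 : forall p, 0 <= P p).
Hypothesis w_ge0 : forall j, 0 <= w j.
Implicit Types (c d : n.-tuple 'I_th) (l : {ffun 'I_th -> 'I_n.+1}) (r : 'S_th).

Local Notation Q := (@stab_weight R n th P).
Local Notation relabel_block r l := (map_tuple r (block_coloring j0 l)).

Lemma weight_ge0 c : 0 <= weight w c.
Proof. exact: prodr_ge0. Qed.

Lemma stab_weight_ge0 c : 0 <= Q c.
Proof. exact: sumr_ge0. Qed.

Lemma multinom_ge0 l : 0 <= multinom R l.
Proof. by rewrite divr_ge0 // prodr_ge0. Qed.

Lemma weight_perm_eq c d : perm_eq c d -> weight w c = weight w d.
Proof. by move=> cd; rewrite /weight -!(big_tuple _ _ _ xpredT w) (perm_big _ cd). Qed.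

Lemma stab_weight_shape c l : is_partition l -> shape c = parts l ->
  Q c = Q (block_coloring j0 l).
Proof.
move=> lP /(perm_eq_relabel_block j0 lP) [r cr].
by rewrite (stab_weight_perm_eq P_conj cr) stab_weight_relabel.
Qed.

Lemma partition_of_relabel_block r l c : is_partition l ->
  perm_eq c (relabel_block r l) -> partition_of c == l.
Proof. by move=> lP cr; rewrite partition_ofE // (shape_perm_eq cr) shape_relabel_block. Qed.

Lemma card_relabel_class r l : is_partition l ->
  #|[set c : n.-tuple 'I_th | perm_eq c (relabel_block r l)]|%:R = multinom R l.
Proof.
move=> lP; have := card_perm_eq_tuple (size_tuple (relabel_block r l)).
have -> : (\prod_(j : 'I_th) (count_mem j (relabel_block r l))`!)%N =
          (\prod_(i < th) (lam l i)`!)%N.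
  rewrite (reindex_inj (@perm_inj _ r)) /=.
  by apply: eq_bigr => i _; rewrite count_relabel count_block_coloring.
have fact_neq0 : ((\prod_(i < th) (lam l i)`!)%N%:R : R) != 0.
  by rewrite pnatr_eq0 -lt0n prodn_gt0 // => i; apply: fact_gt0.
by move=> card_eq; rewrite /multinom -natr_prod -card_eq natrM mulfK.
Qed.

Lemma sum_relabel_class r l (F : n.-tuple 'I_th -> R) (a : R) : is_partition l ->
  (forall c, perm_eq c (relabel_block r l) -> F c = a) ->
  \sum_(c : n.-tuple 'I_th | perm_eq c (relabel_block r l)) F c = multinom R l * a.
Proof.
move=> lP Fa; rewrite (eq_bigr (fun=> a)) //.
rewrite (eq_bigl (mem [set c : n.-tuple 'I_th | perm_eq c (relabel_block r l)])).
  by rewrite sumr_const -(card_relabel_class r lP) mulr_natl.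
by move=> c; rewrite !inE.
Qed.

Lemma sum_relabel_class_weight r l : is_partition l ->
  \sum_(c : n.-tuple 'I_th | perm_eq c (relabel_block r l)) weight w c * Q c =
  multinom R l * (weight w (relabel_block r l) * Q (block_coloring j0 l)).
Proof.
move=> lP; apply: sum_relabel_class => // c cr.
rewrite (weight_perm_eq cr) (stab_weight_shape lP) //.
by apply/eqP; rewrite -partition_ofE // (partition_of_relabel_block lP cr).
Qed.

Lemma cycle_weight_colorings :
  \sum_(p : 'S_n) P p * \prod_(g in porbits p) \sum_(j < th) w j ^+ #|g| =
  \sum_(c : n.-tuple 'I_th) weight w c * Q c.
Proof.
under eq_bigr do rewrite (prod_porbits_sum_expr j0) mulr_sumr.
rewrite (exchange_big_dep xpredT) //=; apply: eq_bigr => c _.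
by rewrite mulr_sumr; apply: eq_bigr => p _; rewrite mulrC.
Qed.

Lemma cycle_weight_shapes :
  \sum_(p : 'S_n) P p * \prod_(g in porbits p) \sum_(j < th) w j ^+ #|g| =
  \sum_(l | is_partition l) \sum_(c : n.-tuple 'I_th | partition_of c == l) weight w c * Q c.
Proof.
rewrite cycle_weight_colorings (partition_big (@partition_of th n) (@is_partition th n)) //.
by move=> c _; apply: partition_of_partition.
Qed.

Lemma shape_class_sum_ge l r : is_partition l ->
  multinom R l * (weight w (relabel_block r l) * Q (block_coloring j0 l)) <=
  \sum_(c : n.-tuple 'I_th | partition_of c == l) weight w c * Q c.
Proof.
move=> lP; rewrite -sum_relabel_class_weight //.
apply: ler_sum_subpred => [c|c]; first exact: partition_of_relabel_block.
by rewrite mulr_ge0 ?weight_ge0 ?stab_weight_ge0.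
Qed.

(* Every colouring of shape [l] is a permutation of some relabelling of the block colouring. *)
Lemma shape_class_sum_le l : is_partition l ->
  \sum_(c : n.-tuple 'I_th | partition_of c == l) weight w c * Q c <=
  \sum_(r : 'S_th) multinom R l * (weight w (relabel_block r l) * Q (block_coloring j0 l)).
Proof.
move=> lP; under [X in _ <= X]eq_bigr do rewrite -sum_relabel_class_weight // big_mkcond.
rewrite exchange_big big_mkcond; apply: ler_sum => c _.
have summand_ge0 r : 0 <= (if perm_eq c (relabel_block r l) then weight w c * Q c else 0).
  by case: ifP => // _; rewrite mulr_ge0 ?weight_ge0 ?stab_weight_ge0.
case: ifP => [|_]; last by apply: sumr_ge0 => r _; apply: summand_ge0.
rewrite partition_ofE // => /eqP /(perm_eq_relabel_block j0 lP) [r cr].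
by rewrite (bigD1 r) //= cr lerDl; apply: sumr_ge0 => r' _; apply: summand_ge0.
Qed.

Lemma cycle_weight_bounds (V : {ffun 'I_th -> 'I_n.+1} -> R) :
  (forall l, is_partition l -> forall r, weight w (relabel_block r l) <= V l) ->
  (forall l, is_partition l -> exists r, weight w (relabel_block r l) = V l) ->
  let Z := \sum_(p : 'S_n) P p * \prod_(g in porbits p) \sum_(j < th) w j ^+ #|g| in
  let S := \sum_(l | is_partition l) V l * (multinom R l * \sum_(p | in_young l p) P p) in
  S <= Z /\ Z <= (th`!)%:R * S.
Proof.
move=> V_ub V_attained Z S.
have young_Q l : is_partition l -> \sum_(p | in_young l p) P p = Q (block_coloring j0 l).
  by move=> lP; apply: eq_bigl => p; rewrite (in_young_preserves j0).
rewrite /Z cycle_weight_shapes /S mulr_sumr; split; apply: ler_sum => l lP.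
  have [r <-] := V_attained l lP.
  by rewrite young_Q // mulrCA; apply: shape_class_sum_ge.
apply: le_trans (shape_class_sum_le lP) _.
rewrite -(card_Sn th) mulr_natl -sumr_const young_Q //; apply: ler_sum => r _.
rewrite mulrCA ler_wpM2r ?V_ub //.
by rewrite mulr_ge0 ?multinom_ge0 ?stab_weight_ge0.
Qed.

End ColoringBounds.

Section EdgeConjugation.
Variables (n : nat) (t : 'S_n).

Definition sort_pair (x y : 'I_n) : 'I_n * 'I_n := if (x < y)%N then (x, y) else (y, x).

Definition edge_image (e : edge n) : 'I_n * 'I_n := sort_pair (t (val e).1) (t (val e).2).

Lemma edge_image_lt (e : edge n) :
  (nat_of_ord (edge_image e).1 < nat_of_ord (edge_image e).2)%N.
Proof.
rewrite /edge_image /sort_pair; case: ifP => //= tN.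
have : t (val e).1 != t (val e).2.
  by rewrite (inj_eq perm_inj) -val_eqE neq_ltn (valP e).
by rewrite neq_ltn tN.
Qed.

Definition edge_conj (e : edge n) : edge n := exist _ (edge_image e) (edge_image_lt e).

Lemma tperm_edge_conj e : tperm_e (edge_conj e) = (tperm_e e ^ t)%g.
Proof. by rewrite /tperm_e tpermJ /= /edge_image /sort_pair; case: ifP => // _; rewrite tpermC. Qed.

End EdgeConjugation.

Lemma edge_conjK n (t : 'S_n) : cancel (edge_conj t) (edge_conj t^-1).
Proof.
move=> [[a b] /= ab]; apply: val_inj.
rewrite /= /edge_image /= /edge_image /sort_pair /=.
by case: (t a < t b)%N; rewrite /= !permK ?ab // ltnNge (ltnW ab).
Qed.

Lemma card_words_conj_le n k (t pi : 'S_n) :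
  (#|[set w : {ffun 'I_k -> edge n} | comp_word w == pi]| <=
   #|[set w : {ffun 'I_k -> edge n} | comp_word w == (pi ^ t)%g]|)%N.
Proof.
pose conj_word (w : {ffun 'I_k -> edge n}) := [ffun i => edge_conj t (w i)].
have conj_word_inj : injective conj_word.
  move=> w1 w2 /ffunP w12; apply/ffunP => i.
  by have := w12 i; rewrite !ffunE => /(can_inj (@edge_conjK n t)).
rewrite -(card_imset _ conj_word_inj); apply: subset_leq_card.
apply/fintype.subsetP => _ /imsetP[w + ->]; rewrite !inE /comp_word => /eqP <-.
rewrite conjg_prod; apply/eqP/eq_bigr => i _.
by rewrite ffunE tperm_edge_conj.
Qed.

Lemma card_words_conj n k (t pi : 'S_n) :
  #|[set w : {ffun 'I_k -> edge n} | comp_word w == (pi ^ t)%g]| =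
  #|[set w : {ffun 'I_k -> edge n} | comp_word w == pi]|.
Proof.
apply/anti_leq; rewrite card_words_conj_le andbT.
by have := card_words_conj_le k t^-1 (pi ^ t)%g; rewrite conjgK.
Qed.

Section Psigma.
Variables (R : realType) (n : nat) (beta : R).

Lemma Psigma_conj (pi t : 'S_n) : Psigma beta (pi ^ t)%g = Psigma beta pi.
Proof.
rewrite /Psigma /=; congr (lim ((_ @ \oo)%classic)); apply: boolp.funext => N.
by apply: eq_bigr => k _; rewrite card_words_conj.
Qed.

(* If the partial sums did not converge, [limn] would return the default point [0]. *)
Lemma limn_ge0 (u : R^nat) : (forall k, 0 <= u k) -> 0 <= limn u.
Proof.
move=> u_ge0; have [u_cvg|u_div] := pselect (cvgn u).
  by apply: limr_ge => //; apply: nearW.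
rewrite /lim /lim_in getPN //= => l ul; apply: u_div; apply/cvg_ex; exists l.
exact: ul.
Qed.

Lemma Psigma_ge0 (pi : 'S_n) : 0 <= beta -> 0 <= Psigma beta pi.
Proof.
move=> beta_ge0; apply: limn_ge0 => N; apply: sumr_ge0 => k _.
by rewrite mulr_ge0 // divr_ge0 // mulr_ge0 ?expR_ge0 // exprn_ge0 // divr_ge0.
Qed.

End Psigma.

Lemma sandwich_div_mul (R : numFieldType) (C S Z : R) :
  1 <= C -> 0 <= S -> S <= Z -> Z <= C * S -> S / C <= Z <= C * S.
Proof.
move=> C_ge1 S_ge0 SZ ZCS; have Z_ge0 := le_trans S_ge0 SZ.
rewrite ZCS andbT ler_pdivrMr ?(lt_le_trans ltr01 C_ge1) //.
by rewrite (le_trans SZ) // ler_peMr.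
Qed.

Lemma weight_indicator (R : pzSemiRingType) th n (j0 : 'I_th) (e : R) (c : n.-tuple 'I_th) :
  weight (fun j => if j == j0 then e else 1) c = e ^+ count_mem j0 c.
Proof.
rewrite count_tuple (big_morph (fun m => e ^+ m) (exprD e) (expr0 e)).
by apply: eq_bigr => i _ /=; case: (tnth c i == j0) => //=.
Qed.

Section Asymptotics.
Variables (R : realType) (th : nat) (beta : R).
Hypotheses (th_gt0 : (0 < th)%N) (beta_ge0 : 0 <= beta).

Let j0 : 'I_th := Ordinal th_gt0.
Let jlast : 'I_th := Ordinal (etrans (ltn_predL th) th_gt0).

Lemma cycle_weight_asymp (w : 'I_th -> R) (V : forall n, {ffun 'I_th -> 'I_n.+1} -> R)
    (Z : nat -> R) :
  (forall j, 0 <= w j) ->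
  (forall n l, is_partition l -> forall r : 'S_th,
     weight w (map_tuple r (block_coloring j0 l)) <= V n l) ->
  (forall n l, is_partition l -> exists r : 'S_th,
     weight w (map_tuple r (block_coloring j0 l)) = V n l) ->
  (forall n, Z n =
     \sum_(p : 'S_n) Psigma beta p * \prod_(g in porbits p) \sum_(j < th) w j ^+ #|g|) ->
  exists C : R, 0 < C /\ forall n : nat,
    let S := \sum_(l : {ffun 'I_th -> 'I_n.+1} | is_partition l) V n l * Gn beta l in
    S / C <= Z n <= C * S.
Proof.
move=> w_ge0 V_ub V_attained Z_eq; exists (th`!)%:R.
split=> [|n /=]; first by rewrite ltr0n fact_gt0.
have [SZ ZS] := cycle_weight_bounds (j0 := j0) (@Psigma_conj R n beta)
  (fun p => Psigma_ge0 p beta_ge0) w_ge0 (V_ub n) (V_attained n).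
rewrite Z_eq; apply: sandwich_div_mul SZ ZS; first by rewrite ler1n fact_gt0.
apply: sumr_ge0 => l lP; have [r <-] := V_attained n l lP.
rewrite mulr_ge0 ?weight_ge0 // mulr_ge0 ?multinom_ge0 //.
by apply: sumr_ge0 => p _; apply: Psigma_ge0.
Qed.

Lemma Zn_cycle_weight n : Zn th n beta =
  \sum_(p : 'S_n) Psigma beta p * \prod_(g in porbits p) \sum_(j < th) 1 ^+ #|g|.
Proof.
apply: eq_bigr => p _; rewrite /ncycles -prodr_const; congr (_ * _).
apply: eq_bigr => g _; rewrite (eq_bigr (fun=> 1)) => [|j _]; last exact: expr1n.
by rewrite sumr_const card_ord.
Qed.

Local Notation weight_h h := (fun j : 'I_th => if j == j0 then expR h else 1).

(* [e^{h|g|} + theta - 1] is the cycle sum for weight [e^h] on colour [j0] and [1] on the others. *)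
Lemma Znh_cycle_weight n (h : R) :
  expR ((h / th%:R) * n%:R) * Znh th n beta h =
  \sum_(p : 'S_n) Psigma beta p * \prod_(g in porbits p) \sum_(j < th) weight_h h j ^+ #|g|.
Proof.
rewrite /Znh mulNr expRN mulrA mulfV ?gt_eqF ?expR_gt0 // mul1r.
apply: eq_bigr => p _; congr (_ * _); apply: eq_bigr => g _.
rewrite (bigD1 j0) //= (eq_bigr (fun=> 1)) => [|j /negPf ->]; last exact: expr1n.
rewrite sumr_const cardC1 card_ord expRM_natr.
by rewrite -[th in th%:R](prednK th_gt0) -natr1 addrA addrK.
Qed.

Lemma weight_h_relabel_block n (h : R) (l : {ffun 'I_th -> 'I_n.+1}) (r : 'S_th) :
  is_partition l ->
  weight (weight_h h) (map_tuple r (block_coloring j0 l)) = expR h ^+ lam l (r^-1 j0)%g.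
Proof.
by move=> lP; rewrite weight_indicator -{1}(permKV r j0) count_relabel count_block_coloring.
Qed.

Lemma Zn_asymp : exists C : R, 0 < C /\ forall n : nat,
  let S := \sum_(l : {ffun 'I_th -> 'I_n.+1} | is_partition l) Gn beta l in
  S / C <= Zn th n beta <= C * S.
Proof.
have [|n l _ r|n l _|n|C [C_gt0 bound]] :=
  @cycle_weight_asymp (fun=> 1) (fun _ _ => 1) (fun n => Zn th n beta).
- by move=> j; apply: ler01.
- by rewrite /weight big1.
- by exists 1%g; rewrite /weight big1.
- exact: Zn_cycle_weight.
exists C; split=> // n; have /= := bound n.
by under eq_bigr do rewrite mul1r.
Qed.

Lemma Znh_asymp_gt0 (h : R) : 0 < h -> exists C : R, 0 < C /\ forall n : nat,
  let S := \sum_(l : {ffun 'I_th -> 'I_n.+1} | is_partition l)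
             expR (h * (lam l 0)%:R) * Gn beta l in
  S / C <= expR ((h / th%:R) * n%:R) * Znh th n beta h <= C * S.
Proof.
move=> h_gt0; apply: (@cycle_weight_asymp (weight_h h)) => [j|n l lP r|n l lP|n].
- by case: ifP => _; rewrite ?expR_ge0.
- rewrite weight_h_relabel_block // expRM_natr.
  by apply: ler_weXn2l; [rewrite ltW ?expR_gt1 | apply: (partition_le (i := j0))].
- by exists 1%g; rewrite weight_h_relabel_block // invg1 perm1 expRM_natr.
- exact: Znh_cycle_weight.
Qed.

Lemma Znh_asymp_lt0 (h : R) : h < 0 -> exists C : R, 0 < C /\ forall n : nat,
  let S := \sum_(l : {ffun 'I_th -> 'I_n.+1} | is_partition l)
             expR (h * (lam l th.-1)%:R) * Gn beta l in
  S / C <= expR ((h / th%:R) * n%:R) * Znh th n beta h <= C * S.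
Proof.
move=> h_lt0; apply: (@cycle_weight_asymp (weight_h h)) => [j|n l lP r|n l lP|n].
- by case: ifP => _; rewrite ?expR_ge0.
- rewrite weight_h_relabel_block // expRM_natr.
  apply: ler_wiXn2l; [exact: expR_ge0 | by rewrite expR_le1 ltW |].
  by apply: (partition_le (j := jlast)); rewrite // -ltnS prednK.
- by exists (tperm j0 jlast); rewrite weight_h_relabel_block // tpermV tpermL expRM_natr.
- exact: Znh_cycle_weight.
Qed.

End Asymptotics.

Theorem lemma2p2 (R : realType) (theta : nat) (beta h : R)
  (Htheta : (2 <= theta)%N) (Hbeta : 0 < beta) :
  (exists C : R, 0 < C /\ forall n : nat,
     let S := \sum_(l : {ffun 'I_theta -> 'I_n.+1} | is_partition l) Gn beta l in
     S / C <= Zn theta n beta <= C * S) /\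
  (0 < h -> exists C : R, 0 < C /\ forall n : nat,
     let S := \sum_(l : {ffun 'I_theta -> 'I_n.+1} | is_partition l)
                expR (h * (lam l 0)%:R) * Gn beta l in
     S / C <= expR ((h / theta%:R) * n%:R) * Znh theta n beta h <= C * S) /\
  (h < 0 -> exists C : R, 0 < C /\ forall n : nat,
     let S := \sum_(l : {ffun 'I_theta -> 'I_n.+1} | is_partition l)
                expR (h * (lam l theta.-1)%:R) * Gn beta l in
     S / C <= expR ((h / theta%:R) * n%:R) * Znh theta n beta h <= C * S).
Proof.
have theta_gt0 : (0 < theta)%N by apply: leq_trans Htheta.
have beta_ge0 : 0 <= beta by apply: ltW.
split; [|split].
- exact: Zn_asymp theta_gt0 beta_ge0.
- exact: Znh_asymp_gt0.
- exact: Znh_asymp_lt0.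
Qed.
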